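(* Let $n\ge1$. Let $M'_n$ be the $2^{n-1}\times2^{n-1}$ matrix with rows and columns indexed by subsets of $\{1,\dots,n-1\}$ and $(M'_n)_{I,J}=a_{n,I,J}$, the number of simple $n$-braids $x$ with $D_L(x)=I$ and $D_R(x)\supseteq J$. Let $M_n$ be the $n!\times n!$ matrix with rows and columns indexed by the simple $n$-braids (same order for rows and columns) with $(M_n)_{x,y}=1$ if $(x,y)$ is normal and $0$ otherwise. Then the characteristic polynomials of $M'_n$ and $M_n$ coincide up to a factor that is a power of the variable, and for every simple $n$-braid $y$ with $D_L(y)=J$ and every $d\ge1$, $$b_{n,d}(y)=\big((1,1,\dots,1)\,M_n'^{\,d-1}\big)_J.$$
   Context: $B_n^+$ is the positive braid monoid with generators $\sigma_1,\dots,\sigma_{n-1}$ and relations $\sigma_i\sigma_j=\sigma_j\sigma_i$ ($|i-j|\ge2$), $\sigma_i\sigma_j\sigma_i=\sigma_j\sigma_i\sigma_j$ ($|i-j|=1$). $\Delta_1=1$, $\Delta_n=\sigma_1\cdots\sigma_{n-1}\Delta_{n-1}$. Simple $n$-braids are the left (equivalently right) divisors of $\Delta_n$ in $B_n^+$. For simple $x$, $D_L(x)$ (resp. $D_R(x)$) is the set of $i\in\{1,\dots,n-1\}$ with $\sigma_i$ a left (resp. right) divisor of $x$. A sequence $(x_1,\dots,x_d)$ of simple $n$-braids is normal if $x_k=\gcd(\Delta_n,x_k\cdots x_d)$ (greatest common left divisor) for each $k$; equivalently $D_R(x_k)\supseteq D_L(x_{k+1})$ for all $k<d$. For a simple $n$-braid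 $y$, $b_{n,d}(y)$ is the number of normal sequences $(x_1,\dots,x_{d-1},y)$. *)

(* Positive braid monoid B_n^+ presented by words over the
   generators sigma_1..sigma_{n-1} (letter i : nat stands for sigma_i),
   modulo the congruence generated by the braid relations. *)
From HB Require Import structures.
From mathcomp Require Import all_boot all_order all_algebra.
From mathcomp Require Export boolp.
Unset Printing Implicit Defensive.

Definition valid (n : nat) (w : seq nat) : bool := all (fun i => 0 < i < n) w.

Definition far (i j : nat) : bool := (i.+1 < j) || (j.+1 < i).
Definition adj (i j : nat) : bool := (i.+1 == j) || (j.+1 == i).

Inductive braid_step : seq nat -> seq nat -> Prop :=
| bs_comm i j : far i j -> braid_step [:: i; j] [:: j; i]
| bs_braid i j : adj i j -> braid_step [:: i; j; i] [:: j; i; j].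

Inductive braid_eq : seq nat -> seq nat -> Prop :=
| be_refl w : braid_eq w w
| be_sym w v : braid_eq w v -> braid_eq v w
| be_trans u v w : braid_eq u v -> braid_eq v w -> braid_eq u w
| be_ctx u v l r : braid_step l r -> braid_eq (u ++ l ++ v) (u ++ r ++ v).

Fixpoint delta (m : nat) : seq nat :=
  if m is m'.+1 then iota 1 m' ++ delta m' else [::].

Definition left_div (n : nat) (x y : seq nat) : Prop :=
  exists z, valid n z /\ braid_eq (x ++ z) y.
Definition right_div (n : nat) (x y : seq nat) : Prop :=
  exists z, valid n z /\ braid_eq (z ++ x) y.

Definition simple (n : nat) (x : seq nat) : Prop :=
  valid n x /\ left_div n x (delta n).

(* Subsets of {1,...,n-1} are encoded as I : {set 'I_n.-1}, k \in I <-> k+1 in the subset *)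
Definition DL_is (n : nat) (x : seq nat) (I : {set 'I_n.-1}) : Prop :=
  forall k : 'I_n.-1, k \in I <-> left_div n [:: k.+1] x.
Definition DR_supset (n : nat) (x : seq nat) (J : {set 'I_n.-1}) : Prop :=
  forall k : 'I_n.-1, k \in J -> right_div n [:: k.+1] x.

Definition is_lgcd (n : nat) (a b g : seq nat) : Prop :=
  left_div n g a /\ left_div n g b /\
  forall z, valid n z -> left_div n z a -> left_div n z b -> left_div n z g.

Definition normal (n : nat) (xs : seq (seq nat)) : Prop :=
  (forall x, x \in xs -> simple n x) /\
  forall k, k < size xs -> is_lgcd n (delta n) (flatten (drop k xs)) (nth [::] xs k).

Definition simple_reps (n : nat) (s : seq (seq nat)) : Prop :=
  (forall x, x \in s -> simple n x) /\
  (forall x, simple n x -> exists i : 'I_(size s), braid_eq x (nth [::] s i)) /\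
  (forall i j : 'I_(size s), braid_eq (nth [::] s i) (nth [::] s j) -> i = j).

Definition a_count (n : nat) (s : seq (seq nat)) (I J : {set 'I_n.-1}) : nat :=
  #|[set i : 'I_(size s) | `[< DL_is n (nth [::] s i) I /\ DR_supset n (nth [::] s i) J >]]|.

Local Open Scope ring_scope.

Definition Mprime (n : nat) (s : seq (seq nat)) : 'M[int]_(#|{set 'I_n.-1}|) :=
  \matrix_(i, j) (a_count n s (enum_val i) (enum_val j))%:Z.

Definition Mn (n : nat) (s : seq (seq nat)) : 'M[int]_(size s) :=
  \matrix_(i, j) (if `[< normal n [:: nth [::] s i; nth [::] s j] >] then 1 else 0).

Local Close Scope ring_scope.

Definition b_count (n d : nat) (s : seq (seq nat)) (y : seq nat) : nat :=
  #|[set f : {ffun 'I_(d.-1) -> 'I_(size s)} |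
     `[< normal n ([seq nth [::] s (f k) | k <- enum 'I_(d.-1)] ++ [:: y]) >]]|.

(* Left cancellation and the description of the common right multiples of two
   letters reduce the gcd condition defining normal sequences to single letters:
   [(x_1, ..., x_d)] is normal iff every letter starting [x_(k+1)] ends [x_k],
   because [delta n] never contains a factor [j j] (no two strands cross
   twice).  Hence the normal sequences ending in [y] are counted by a
   transfer-matrix recursion indexed by [DL y], whose matrix is [M'_n].
   Finally [M_n = P Q] and [M'_n = Q P] for the incidence matrices
   [P x K = (K \subset DR x)] and [Q K y = (K == DL y)], and [P Q], [Q P] have
   the same characteristic polynomial up to a power of [X]. *)

From Stdlib Require Import Setoid Morphisms.
From HB Require Import structures.
From mathcomp Require Import all_boot all_order all_algebra zify.
Set Implicit Arguments. Unset Strict Implicit.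
Import GRing.Theory.

Notation "u ≡ v" := (braid_eq u v) (at level 70).

Lemma braid_eq_cat u u' v v' : u ≡ u' -> v ≡ v' -> u ++ v ≡ u' ++ v'.
Proof.
have in_context l r x y : x ≡ y -> l ++ x ++ r ≡ l ++ y ++ r.
  elim=> {x y} [x|x y _ IH|x y z _ IH1 _ IH2|u0 v0 l0 r0 st].
  - exact: be_refl.
  - exact: be_sym.
  - exact: be_trans IH2.
  - by have := be_ctx (l ++ u0) (v0 ++ r) _ _ st; rewrite !catA.
move=> Hu Hv; apply: (@be_trans _ (u' ++ v)).
  by have := in_context [::] v _ _ Hu.
by have := in_context u' [::] _ _ Hv; rewrite !cats0.
Qed.

Lemma braid_eq_all (P : pred nat) u v : u ≡ v -> all P u = all P v.
Proof.
elim=> {u v} [u|u v _ IH|u v w _ IH1 _ IH2|u v l r []] //=.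
- by rewrite IH1 IH2.
all: by move=> i j _; rewrite !all_cat /=; case: (P i); case: (P j).
Qed.

Lemma braid_eq_size u v : u ≡ v -> size u = size v.
Proof.
elim=> {u v} [u|u v _ IH|u v w _ IH1 _ IH2|u v l r []] //=.
- by rewrite IH1.
all: by move=> *; rewrite !size_cat.
Qed.

Lemma braid_eq_valid n u v : u ≡ v -> valid n u = valid n v.
Proof. exact: braid_eq_all. Qed.

Add Parametric Relation : (seq nat) braid_eq
  reflexivity proved by be_refl symmetry proved by be_sym transitivity proved by be_trans
  as braid_eq_rel.
Add Parametric Morphism : (@cons nat) with signature eq ==> braid_eq ==> braid_eq
  as cons_braid_eq.
Proof. by move=> a x y; apply: (braid_eq_cat (be_refl [:: a])). Qed.
Add Parametric Morphism : (@cat nat) with signature braid_eq ==> braid_eq ==> braid_eq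
  as cat_braid_eq.
Proof. by move=> x y H u v K; apply: braid_eq_cat. Qed.

#[local] Hint Resolve be_refl : core.

Ltac letter_arith := unfold far, adj in *; lia.

Lemma far_sym : symmetric far. Proof. by move=> a b; rewrite /far orbC. Qed.
Lemma adj_sym : symmetric adj. Proof. by move=> a b; rewrite /adj orbC. Qed.

Lemma letter_cases a b : [\/ a = b, adj a b | far a b].
Proof.
have : a = b \/ adj a b \/ far a b by letter_arith.
by case=> [E|[E|E]]; [apply: Or31 | apply: Or32 | apply: Or33].
Qed.

Lemma far_commute {a b} w : far a b -> [:: a, b & w] ≡ [:: b, a & w].
Proof. move=> ab; exact: (be_ctx [::] w _ _ (bs_comm _ _ ab)). Qed.

Lemma adj_braid {a b} w : adj a b -> [:: a, b, a & w] ≡ [:: b, a, b & w].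
Proof. move=> ab; exact: (be_ctx [::] w _ _ (bs_braid _ _ ab)). Qed.

(* The three ways [a :: X ≡ b :: Y] can hold: this common right multiple of the
   letters [a] and [b] is a multiple of their lcm [a], [aba] or [ab]. *)
Definition through_lcm a b X Y : Prop :=
  [\/ a = b /\ X ≡ Y,
      adj a b /\ exists Z, X ≡ [:: b, a & Z] /\ Y ≡ [:: a, b & Z]
    | far a b /\ exists Z, X ≡ b :: Z /\ Y ≡ a :: Z].

Lemma through_lcm_same a X Y : through_lcm a a X Y -> X ≡ Y.
Proof. by case=> [[_ //]|[H _]|[H _]]; letter_arith. Qed.

Lemma through_lcm_adj a b X Y : adj a b -> through_lcm a b X Y ->
  exists Z, X ≡ [:: b, a & Z] /\ Y ≡ [:: a, b & Z].
Proof. by move=> ab; case=> [[E _]|[_ //]|[H _]]; letter_arith. Qed.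

Lemma through_lcm_far a b X Y : far a b -> through_lcm a b X Y ->
  exists Z, X ≡ b :: Z /\ Y ≡ a :: Z.
Proof. by move=> ab; case=> [[E _]|[H _]|[_ //]]; letter_arith. Qed.

Lemma through_lcm_sym a b X Y : through_lcm a b X Y -> through_lcm b a Y X.
Proof.
case=> [[-> H]|[H [Z [H1 H2]]]|[H [Z [H1 H2]]]].
- by apply: Or31; split=> //; symmetry.
- by apply: Or32; split; [rewrite adj_sym | exists Z].
- by apply: Or33; split; [rewrite far_sym | exists Z].
Qed.

Lemma through_lcm_braid_eq a b X Y X' Y' :
  X ≡ X' -> Y ≡ Y' -> through_lcm a b X Y -> through_lcm a b X' Y'.
Proof.
move=> XX YY; case=> [[-> H]|[H [Z [H1 H2]]]|[H [Z [H1 H2]]]].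
- by apply: Or31; split=> //; rewrite -XX -YY.
- by apply: Or32; split=> //; exists Z; rewrite -XX -YY.
- by apply: Or33; split=> //; exists Z; rewrite -XX -YY.
Qed.

Ltac size_arith := repeat match goal with
  H : ?x ≡ ?y |- _ => have := braid_eq_size H; clear H end; rewrite /=; lia.

(* One induction step of [cons_braid_eq_lcm]: transitivity of [through_lcm]
   for words of length [m], assuming the claim for shorter words. *)
Section ThroughLcmTrans.

Variable m : nat.
Hypothesis lcm_below : forall a b U V,
  size U < m -> a :: U ≡ b :: V -> through_lcm a b U V.

Lemma cons_cancel_below a U V : size U < m -> a :: U ≡ a :: V -> U ≡ V.
Proof. by move=> sU H; apply: through_lcm_same (lcm_below sU H). Qed.

Lemma through_lcm_far_adj a b c X Y Z : size X = m -> far a c -> adj c b ->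
  (exists U, X ≡ c :: U /\ Z ≡ a :: U) ->
  (exists V, Z ≡ [:: b, c & V] /\ Y ≡ [:: c, b & V]) -> through_lcm a b X Y.
Proof.
move=> sX ac cb [U [XU ZU]] [V [ZV YV]].
have ca : far c a by rewrite far_sym.
have bc : adj b c by rewrite adj_sym.
have aU : a :: U ≡ [:: b, c & V] by rewrite -ZU.
have sU : size U < m by size_arith.
case: (letter_cases a b) => [ab|ab|ab]; first by subst b; letter_arith.
- have ba : adj b a by rewrite adj_sym.
  have [T [UT VT]] := through_lcm_adj ab (lcm_below sU aU).
  have sV : size V < m by size_arith.
  have [S [VS TS]] := through_lcm_far ca (lcm_below sV VT).
  have sT : size T < m by size_arith.
  have [R [TR SR]] := through_lcm_adj bc (lcm_below sT TS).
  apply: Or32; split=> //; exists [:: c, b, a & R]; split.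
  + rewrite XU UT TR (far_commute [:: b & R] ac) (adj_braid [:: a, b & R] cb).
    by rewrite (adj_braid R ba) (far_commute [:: b, a & R] ca).
  + rewrite YV VS SR (adj_braid [:: c & R] ba) (far_commute [:: b, a, c & R] ca).
    by rewrite (far_commute R ac) (adj_braid [:: a & R] cb).
- have ba : far b a by rewrite far_sym.
  have [T [UT VT]] := through_lcm_far ab (lcm_below sU aU).
  have sV : size V < m by size_arith.
  have [S [VS TS]] := through_lcm_far ca (lcm_below sV VT).
  apply: Or33; split=> //; exists [:: c, b & S]; split.
  + by rewrite XU UT TS (adj_braid S cb).
  + by rewrite YV VS (far_commute S ba) (far_commute [:: b & S] ca).
Qed.

Lemma through_lcm_far_far a b c X Y Z : size X = m -> far a c -> far c b ->
  (exists U, X ≡ c :: U /\ Z ≡ a :: U) ->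
  (exists V, Z ≡ b :: V /\ Y ≡ c :: V) -> through_lcm a b X Y.
Proof.
move=> sX ac cb [U [XU ZU]] [V [ZV YV]].
have ca : far c a by rewrite far_sym.
have aU : a :: U ≡ b :: V by rewrite -ZU.
have sU : size U < m by size_arith.
case: (letter_cases a b) => [ab|ab|ab].
- by subst b; apply: Or31; split=> //; rewrite XU YV (cons_cancel_below sU aU).
- have [T [UT VT]] := through_lcm_adj ab (lcm_below sU aU).
  apply: Or32; split=> //; exists [:: c & T]; split.
  + by rewrite XU UT (far_commute [:: a & T] cb) (far_commute T ca).
  + by rewrite YV VT (far_commute [:: b & T] ca) (far_commute T cb).
- have [T [UT VT]] := through_lcm_far ab (lcm_below sU aU).
  apply: Or33; split=> //; exists [:: c & T]; split.
  + by rewrite XU UT (far_commute T cb).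
  + by rewrite YV VT (far_commute T ca).
Qed.

Lemma through_lcm_adj_adj a b c X Y Z : size X = m -> adj a c -> adj c b ->
  (exists U, X ≡ [:: c, a & U] /\ Z ≡ [:: a, c & U]) ->
  (exists V, Z ≡ [:: b, c & V] /\ Y ≡ [:: c, b & V]) -> through_lcm a b X Y.
Proof.
move=> sX ac cb [U [XU ZU]] [V [ZV YV]].
have ca : adj c a by rewrite adj_sym.
have bc : adj b c by rewrite adj_sym.
have acU : [:: a, c & U] ≡ [:: b, c & V] by rewrite -ZU.
have scU : size (c :: U) < m by size_arith.
have sU : size U < m by size_arith.
have [ab|ab] : a = b \/ far a b by letter_arith.
- subst b; apply: Or31; split=> //.
  by rewrite XU YV (cons_cancel_below sU (cons_cancel_below scU acU)).
- have ba : far b a by rewrite far_sym.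
  have [T [UT VT]] := through_lcm_far ab (lcm_below scU acU).
  have [P [UP TP]] := through_lcm_adj cb (lcm_below sU UT).
  rewrite TP in VT.
  have sV : size V < m by size_arith.
  have [Q [VQ PQ]] := through_lcm_adj ca (lcm_below sV VT).
  have sbP : size (b :: P) < m by size_arith.
  have sP : size P < m by size_arith.
  have [S [PS QS]] := through_lcm_far ba (lcm_below sP (cons_cancel_below sbP PQ)).
  apply: Or33; split=> //; exists [:: c, a, b, c & S]; split.
  + rewrite XU UP PS (far_commute [:: c, a & S] ab) (adj_braid S ac).
    by rewrite (adj_braid [:: a, c & S] cb) (far_commute [:: c & S] ba).
  + rewrite YV VQ QS (far_commute [:: c, b & S] ba) (adj_braid S bc).
    by rewrite (adj_braid [:: b, c & S] ca).
Qed.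

Lemma through_lcm_trans a b c X Y Z : size X = m ->
  through_lcm a c X Z -> through_lcm c b Z Y -> through_lcm a b X Y.
Proof.
move=> sX H1 H2.
have [[Eac XZ]|[ac HU]|[ac HU]] := H1.
  by subst c; apply: (through_lcm_braid_eq _ _ H2); rewrite ?XZ.
all: have [[Ecb ZY]|[cb HV]|[cb HV]] := H2.
all: try by subst c; apply: (through_lcm_braid_eq _ _ H1); rewrite ?ZY.
- exact: through_lcm_adj_adj sX ac cb HU HV.
- case: HU HV => U [XU ZU] [V [ZV YV]].
  have sY : size Y = m by size_arith.
  have bc : far b c by rewrite far_sym.
  have ca : adj c a by rewrite adj_sym.
  apply: through_lcm_sym; apply: (through_lcm_far_adj (Z := Z) sY bc ca).
  + by exists V.
  + by exists U.
- exact: through_lcm_far_adj sX ac cb HU HV.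
- exact: through_lcm_far_far sX ac cb HU HV.
Qed.

End ThroughLcmTrans.

Lemma cons_braid_eq_lcm a b X Y : a :: X ≡ b :: Y -> through_lcm a b X Y.
Proof.
move sX : (size X) => m; elim/ltn_ind: m a b X Y sX => m IH a b X Y sX.
have lcm_below c d U V : size U < m -> c :: U ≡ d :: V -> through_lcm c d U V.
  by move=> sU; apply: IH sU _ _ _ _ erefl.
move E : (a :: X) => w; move F : (b :: Y) => v H.
elim: H a b X Y E F sX => {w v} [w|w v H IH1|u v w H1 IH1 H2 IH2|u v l r st] a b X Y E F sX.
- by subst; case: F => -> ->; apply: Or31.
- apply: through_lcm_sym; apply: IH1 => //; subst.
  by have := braid_eq_size H => /= -[].
- case: v H1 H2 IH1 IH2 => [|c Z] H1 H2 IH1 IH2; first by have := braid_eq_size H1; subst.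
  have sZ : size Z = m by have := braid_eq_size H1; subst => /= -[].
  exact: through_lcm_trans sX (IH1 _ _ _ _ E erefl sX) (IH2 _ _ _ _ erefl F sZ).
- case: u E F => [|c u] /= E F.
  + case: st E F => i j ij /= [-> ->] [-> ->].
    * by apply: Or33; split=> //; exists v.
    * by apply: Or32; split=> //; exists v.
  + case: E F => -> -> [<- ->]; apply: Or31; split=> //.
    exact: be_ctx.
Qed.

Lemma cons_braid_inj a X Y : a :: X ≡ a :: Y -> X ≡ Y.
Proof. by move/cons_braid_eq_lcm/through_lcm_same. Qed.

Lemma cons_braid_eq_adj a b X Y : adj a b -> a :: X ≡ b :: Y ->
  exists Z, X ≡ [:: b, a & Z] /\ Y ≡ [:: a, b & Z].
Proof. by move=> ab /cons_braid_eq_lcm; apply: through_lcm_adj. Qed.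

Lemma cons_braid_eq_far a b X Y : far a b -> a :: X ≡ b :: Y ->
  exists Z, X ≡ b :: Z /\ Y ≡ a :: Z.
Proof. by move=> ab /cons_braid_eq_lcm; apply: through_lcm_far. Qed.

(* Label the strands by [g]: the letter [i] crosses the strands at positions
   [i] and [i.+1], then swaps their labels.  The braid relations only permute
   the list of crossed label pairs, while in [delta n] no two strands cross twice;
   a factor [j j] would make them cross twice. *)
Definition swap_labels (g : nat -> nat) i p :=
  if p == i then g i.+1 else if p == i.+1 then g i else g p.

Definition upair (x y : nat) := (minn x y, maxn x y).

Fixpoint crossings g w :=
  if w is i :: w' then upair (g i) (g i.+1) :: crossings (swap_labels g i) w' else [::].

Lemma crossings_cat g u v :
  crossings g (u ++ v) = crossings g u ++ crossings (foldl swap_labels g u) v.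
Proof. by elim: u g => [|i u IH] g //=; rewrite IH. Qed.

Lemma upairC x y : upair x y = upair y x.
Proof. by rewrite /upair minnC maxnC. Qed.

Lemma upair_inj x y u v : upair x y = upair u v -> (x = u /\ y = v) \/ (x = v /\ y = u).
Proof. rewrite /upair => -[]; lia. Qed.

Ltac solve_labels := rewrite /swap_labels;
  repeat match goal with |- context [if ?b then _ else _] => case: (boolP b) => ? end;
  try done; try (by exfalso; letter_arith); try (by congr (_ _); letter_arith).

Lemma braid_step_crossings g l r : braid_step l r ->
  perm_eq (crossings g l) (crossings g r) /\ foldl swap_labels g l = foldl swap_labels g r.
Proof.
case=> i j ij /=.
  split; last by apply: funext => p; solve_labels.
  have -> : swap_labels g i j = g j by solve_labels.
  have -> : swap_labels g i j.+1 = g j.+1 by solve_labels.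
  have -> : swap_labels g j i = g i by solve_labels.
  have -> : swap_labels g j i.+1 = g i.+1 by solve_labels.
  by rewrite (perm_catCA [:: _] [:: _] [::]).
wlog -> : i j ij / j = i.+1.
  move=> W; case/orP: (ij) => /eqP E; first exact: W.
  have ji : adj j i by rewrite adj_sym.
  have [P F] := W j i ji (esym E).
  by rewrite perm_sym F.
split; last by apply: funext => p; solve_labels.
have -> : swap_labels g i i.+1 = g i by solve_labels.
have -> : swap_labels g i i.+2 = g i.+2 by solve_labels.
have -> : swap_labels (swap_labels g i) i.+1 i = g i.+1 by solve_labels.
have -> : swap_labels (swap_labels g i) i.+1 i.+1 = g i.+2 by solve_labels.
have -> : swap_labels g i.+1 i = g i by solve_labels.
have -> : swap_labels g i.+1 i.+1 = g i.+2 by solve_labels.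
have -> : swap_labels (swap_labels g i.+1) i i.+1 = g i by solve_labels.
have -> : swap_labels (swap_labels g i.+1) i i.+2 = g i.+1 by solve_labels.
rewrite (upairC (g i.+1) (g i.+2)) (upairC (g i) (g i.+1)) (upairC (g i) (g i.+2)).
by rewrite perm_sym -{1}[[:: _; _; _]]revK perm_rev.
Qed.

Lemma braid_eq_crossings g u v : u ≡ v ->
  perm_eq (crossings g u) (crossings g v) /\ foldl swap_labels g u = foldl swap_labels g v.
Proof.
move=> H; elim: H g => {u v} [u|u v _ IH|u v w _ IH1 _ IH2|u v l r st] g //.
- by have [P F] := IH g; rewrite perm_sym P F.
- have [P1 F1] := IH1 g; have [P2 F2] := IH2 g.
  by rewrite (perm_trans P1 P2) F1 F2.
- have [P F] := braid_step_crossings (foldl swap_labels g u) st.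
  by rewrite !crossings_cat !foldl_cat F perm_cat2l perm_cat2r P.
Qed.

Lemma foldl_swap_iota p q g x : foldl swap_labels g (iota p q) x =
  if p <= x < p + q then g x.+1 else if x == p + q then g p else g x.
Proof. by elim: q p g => [|q IH] p g /=; [|rewrite IH addSnnS]; solve_labels. Qed.

Lemma crossings_iota p q g :
  crossings g (iota p q) = [seq upair (g p) (g (p + k.+1)) | k <- iota 0 q].
Proof.
elim: q p g => [|q IH] p g //=.
rewrite IH -(addn0 1) iotaDl -map_comp; congr (_ :: _); first by rewrite addn1.
by apply: eq_map => k /=; congr upair; solve_labels.
Qed.

Lemma crossings_delta k g : {in [pred x | 0 < x <= k] &, injective g} ->
  uniq (crossings g (delta k)) /\
  forall pr, pr \in crossings g (delta k) ->
    exists x y, [/\ 0 < x <= k, 0 < y <= k & pr = upair (g x) (g y)].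
Proof.
elim: k g => [|k IH] g g_inj //=; rewrite crossings_cat crossings_iota.
set h := foldl swap_labels g (iota 1 k).
have hE x : 0 < x <= k -> h x = g x.+1.
  by move=> Hx; rewrite /h foldl_swap_iota; case: ifP => //; lia.
have g_inj' x y : 0 < x <= k.+1 -> 0 < y <= k.+1 -> g x = g y -> x = y.
  by move=> Hx Hy; apply: g_inj; rewrite inE.
have [h_uniq h_pairs] : uniq (crossings h (delta k)) /\
    forall pr, pr \in crossings h (delta k) ->
      exists x y, [/\ 0 < x <= k, 0 < y <= k & pr = upair (h x) (h y)].
  apply: IH => x y; rewrite !inE => Hx Hy; rewrite !hE // => E.
  by have := g_inj' x.+1 y.+1 ltac:(lia) ltac:(lia) E => -[].
split.
- rewrite cat_uniq h_uniq andbT; apply/andP; split.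
  + rewrite map_inj_in_uniq ?iota_uniq // => a b; rewrite !mem_iota => Ha Hb.
    case/upair_inj => [[_ E]|[E _]].
    * by have := g_inj' (1 + a.+1) (1 + b.+1) ltac:(lia) ltac:(lia) E; lia.
    * by have := g_inj' 1 (1 + b.+1) ltac:(lia) ltac:(lia) E; lia.
  + apply/hasPn => pr /h_pairs [x [y [Hx Hy ->]]].
    apply/negP => /mapP [j]; rewrite mem_iota => Hj.
    rewrite !hE //; case/upair_inj => [[E _]|[_ E]].
    * by have := g_inj' x.+1 1 ltac:(lia) ltac:(lia) E; lia.
    * by have := g_inj' y.+1 1 ltac:(lia) ltac:(lia) E; lia.
- move=> pr; rewrite mem_cat => /orP [/mapP [j]|/h_pairs [x [y [Hx Hy ->]]]].
  + by rewrite mem_iota => Hj ->; exists 1, (1 + j.+1); split=> //; lia.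
  + by exists x.+1, y.+1; rewrite -!hE //; split=> //; lia.
Qed.

Lemma delta_square_free n u j v : ~ (u ++ [:: j, j & v] ≡ delta n).
Proof.
move=> /(braid_eq_crossings id) [P _].
have [U _] := @crossings_delta n id (in2W (@inj_id nat)).
move: U; rewrite -(perm_uniq P) crossings_cat cat_uniq /= => /and3P [_ _] /andP [].
set h := foldl swap_labels id u.
have -> : swap_labels h j j = h j.+1 by solve_labels.
have -> : swap_labels h j j.+1 = h j by solve_labels.
by rewrite inE upairC eqxx.
Qed.

Lemma valid_cat n u v : valid n (u ++ v) = valid n u && valid n v.
Proof. exact: all_cat. Qed.

Lemma valid_mono m n w : m <= n -> valid m w -> valid n w.
Proof. by move=> mn; apply: sub_all => i /andP [i_gt0 im]; rewrite i_gt0 (leq_trans im). Qed.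

Lemma valid_iota n p q : 0 < p -> p + q <= n -> valid n (iota p q).
Proof. by move=> p_gt0 pqn; apply/allP => i; rewrite mem_iota => /andP [? ?]; apply/andP; split; lia. Qed.

Lemma valid_delta n : valid n (delta n).
Proof. by elim: n => [|n IH] //=; rewrite valid_cat valid_iota // (valid_mono _ IH). Qed.

Lemma valid_flatten n xs : all (valid n) xs -> valid n (flatten xs).
Proof. by elim: xs => [|x xs IH] //= /andP [Vx Vxs]; rewrite valid_cat Vx IH. Qed.

Lemma far_rcons a w : all (far a) w -> w ++ [:: a] ≡ a :: w.
Proof.
elim: w => [|b w IH] //= /andP [ab aw].
by rewrite (IH aw) (far_commute w (_ : far b a)) // far_sym.
Qed.

Lemma iota_rcons p q j : p <= j -> j.+2 <= p + q -> iota p q ++ [:: j] ≡ j.+1 :: iota p q.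
Proof.
elim: q p => [|q IH] p pj jpq; first by lia.
case: (ltngtP p j) => [pj'|jp|<-]; last first.
- case: q IH jpq => [|q] IH jpq; first by lia.
  rewrite /= far_rcons; last by apply/allP => x; rewrite mem_iota /far; lia.
  by rewrite (adj_braid _ (_ : adj p p.+1)) // /adj eqxx.
- by lia.
- by rewrite /= IH; try lia; rewrite (far_commute _ (_ : far p j.+1)) // /far; lia.
Qed.

Lemma delta_factor_letter n i : 0 < i < n -> exists z, valid n z /\ i :: z ≡ delta n.
Proof.
elim: n i => [|k IH] i Hi; first by lia.
case: (ltngtP i 1) => [|i_gt1|->]; first by lia.
- have [z [Vz Ez]] := IH i.-1 ltac:(lia).
  exists (iota 1 k ++ z); split.
    by rewrite valid_cat valid_iota // (valid_mono _ Vz).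
  rewrite /= -Ez -cat_rcons -cats1 iota_rcons; try lia.
  by rewrite prednK //; lia.
- case: k IH Hi => [|k] IH Hi; first by lia.
  exists (iota 2 k ++ delta k.+1); split=> //.
  by rewrite valid_cat valid_iota // (valid_mono _ (valid_delta _)).
Qed.

Definition starts_with j y := exists u, j :: u ≡ y.
Definition ends_with j x := exists z, z ++ [:: j] ≡ x.

Lemma left_div_letter n j y : valid n y -> left_div n [:: j] y <-> starts_with j y.
Proof.
move=> Vy; split=> [[u [_ E]]|[u E]]; first by exists u.
by exists u; split=> //; move: Vy; rewrite -(braid_eq_valid n E) => /andP [].
Qed.

Lemma right_div_letter n j x : valid n x -> right_div n [:: j] x <-> ends_with j x.
Proof.
move=> Vx; split=> [[z [_ E]]|[z E]]; first by exists z.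
by exists z; split=> //; move: Vx; rewrite -(braid_eq_valid n E) valid_cat => /andP [].
Qed.

Lemma starts_with_letter n j y : valid n y -> starts_with j y -> 0 < j < n.
Proof. by move=> Vy [u E]; move: Vy; rewrite -(braid_eq_valid n E) => /andP []. Qed.

Lemma delta_cut_square_free n x y j :
  x ++ y ≡ delta n -> ends_with j x -> starts_with j y -> False.
Proof.
move=> E [z Ez] [u Eu]; apply: (@delta_square_free n z j u).
by rewrite -E -Ez -Eu -catA.
Qed.

(* If [x] is a left factor of [delta n], so is [x i] unless [x] already ends with [i]. *)
Lemma delta_cofactor_letter n x y i : x ++ y ≡ delta n -> 0 < i < n ->
  ends_with i x \/ starts_with i y.
Proof.
move sx : (size x) => k; elim/ltn_ind: k i x y sx => k IH i x y sx H Hi.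
case/lastP: x sx H => [|x b] sx H.
  by have [z [_ E]] := delta_factor_letter Hi; right; exists z; rewrite E -H.
have H' : x ++ b :: y ≡ delta n by rewrite -H cat_rcons.
have sx' : size x < k by rewrite -sx size_rcons.
have Hb : 0 < b < n.
  move: (valid_delta n); rewrite -(braid_eq_valid n H) valid_cat => /andP [/allP V _].
  by apply: V; rewrite mem_rcons inE eqxx.
case: (IH _ sx' i x _ erefl H' Hi) => [[v Ev]|[u Eu]].
all: case: (letter_cases i b) => [<-|ib|ib]; first by left; exists x; rewrite cats1.
- have bi : adj b i by rewrite adj_sym.
  have sv : size v < k by have := braid_eq_size Ev; rewrite size_cat /=; lia.
  have H2 : v ++ [:: i, b & y] ≡ delta n by rewrite -H' -Ev -catA.
  case: (IH _ sv b v _ erefl H2 Hb) => [[w Ew]|[u Eu]].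
  + left; exists (w ++ [:: i; b]); rewrite -cats1 -Ev -Ew -!catA /=.
    by rewrite (adj_braid [::] bi).
  + have [Z [_ EZ]] := cons_braid_eq_adj bi Eu.
    by right; exists Z; rewrite (cons_braid_inj EZ).
- left; exists (v ++ [:: b]); rewrite -cats1 -Ev -!catA /=.
  by rewrite (far_commute [::] (_ : far b i)) // far_sym.
- by have [Z [_ EZ]] := cons_braid_eq_adj ib Eu; right; exists (b :: Z); rewrite EZ.
- by have [Z [_ EZ]] := cons_braid_eq_far ib Eu; right; exists Z; rewrite EZ.
Qed.

Section CoprimeCofactors.

Variables A B : seq nat.
Hypothesis coprimeAB : forall j, starts_with j A -> starts_with j B -> False.

Lemma starts_with_cat_coprime c x :
  starts_with c (x ++ A) -> starts_with c (x ++ B) -> starts_with c x.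
Proof.
move sx : (size x) => k; elim/ltn_ind: k x c sx => k IH [|a x] c sx [U EU] [V EV].
  by case: (coprimeAB (j := c)); [exists U | exists V].
have sx' : size x < k by rewrite -sx.
case: (letter_cases c a) => [<-|ca|ca]; first by exists x.
- have [Z1 [_ E1]] := cons_braid_eq_adj ca EU.
  have [Z2 [_ E2]] := cons_braid_eq_adj ca EV.
  have [W EW] : starts_with c x.
    by apply: (IH _ sx' x c erefl); [exists (a :: Z1) | exists (a :: Z2)]; symmetry.
  have sW : size W < k by have := braid_eq_size EW; rewrite /=; lia.
  have [W' EW'] : starts_with a W.
    apply: (IH _ sW W a erefl); [exists Z1 | exists Z2]; apply: (@cons_braid_inj c).
      by rewrite -E1 -EW.
    by rewrite -E2 -EW.
  by exists [:: a, c & W']; rewrite -EW -EW' (adj_braid _ (_ : adj a c)) // adj_sym.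
- have [Z1 [_ E1]] := cons_braid_eq_far ca EU.
  have [Z2 [_ E2]] := cons_braid_eq_far ca EV.
  have [W EW] : starts_with c x.
    by apply: (IH _ sx' x c erefl); [exists Z1 | exists Z2]; symmetry.
  by exists (a :: W); rewrite -EW (far_commute _ ca).
Qed.

Lemma prefix_cat_coprime z x :
  (exists U, z ++ U ≡ x ++ A) -> (exists V, z ++ V ≡ x ++ B) -> exists W, z ++ W ≡ x.
Proof.
elim: z x => [|c z IH] x [U EU] [V EV]; first by exists x.
have [x1 E1] : starts_with c x by apply: starts_with_cat_coprime; [exists (z ++ U) | exists (z ++ V)].
rewrite -E1 /= in EU EV.
have [W EW] := IH x1 (ex_intro _ U (cons_braid_inj EU)) (ex_intro _ V (cons_braid_inj EV)).
by exists W; rewrite -E1 /= EW.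
Qed.

End CoprimeCofactors.

Definition DL n (y : seq nat) : {set 'I_n.-1} :=
  [set k : 'I_n.-1 | `[< left_div n [:: k.+1] y >]].
Definition DR n (x : seq nat) : {set 'I_n.-1} :=
  [set k : 'I_n.-1 | `[< right_div n [:: k.+1] x >]].
Definition normal_step n (x y : seq nat) : bool := DL n y \subset DR n x.

Lemma DL_isE n y J : DL_is n y J <-> J = DL n y.
Proof.
split=> [H|-> k]; last by rewrite inE; split=> /asboolP.
by apply/setP => k; rewrite inE; apply/idP/asboolP => /H.
Qed.

Lemma DR_supsetE n x J : DR_supset n x J <-> J \subset DR n x.
Proof.
split=> [H|/subsetP H k /H]; last by rewrite inE => /asboolP.
by apply/subsetP => k /H Hk; rewrite inE; apply/asboolP.
Qed.

Lemma normal_stepP n x y : reflect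
  (forall j, 0 < j < n -> left_div n [:: j] y -> right_div n [:: j] x) (normal_step n x y).
Proof.
apply: (iffP subsetP) => H.
  move=> j Hj Hl; have Hk : j.-1 < n.-1 by lia.
  have := H (Ordinal Hk); rewrite !inE /= prednK; last by lia.
  by move=> K; apply/asboolP; apply: K; apply/asboolP.
move=> k; rewrite !inE => /asboolP Hk; apply/asboolP.
by apply: H Hk; have := ltn_ord k; lia.
Qed.

Section NormalSequences.

Variables (n : nat) (xs : seq (seq nat)).
Hypothesis xs_simple : forall x, x \in xs -> simple n x.

Let x_ k := nth [::] xs k.

Lemma nth_simple k : k < size xs -> simple n (x_ k).
Proof. by move=> Hk; apply: xs_simple; apply: mem_nth. Qed.

Lemma nth_valid k : k < size xs -> valid n (x_ k).
Proof. by case/nth_simple. Qed.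

Lemma flatten_drop_valid k : valid n (flatten (drop k xs)).
Proof.
by apply/valid_flatten/allP => x /mem_drop /xs_simple [].
Qed.

Lemma flatten_drop_nth k : k < size xs -> flatten (drop k xs) = x_ k ++ flatten (drop k.+1 xs).
Proof. by move=> Hk; rewrite (drop_nth [::] Hk). Qed.

(* If [j] starts [x_(k+1)] but does not end [x_k], then [x_k j] is a common left
   divisor of [delta n] and of [x_k x_(k+1) ...], longer than [x_k]. *)
Lemma normal_normal_step : normal n xs ->
  forall k, k.+1 < size xs -> normal_step n (x_ k) (x_ k.+1).
Proof.
case=> _ xs_gcd k Hk; have Hk' : k < size xs by lia.
have [x' [Vx' Ex']] := (nth_simple Hk').2.
apply/normal_stepP => j Hj Hl.
case: (pselect (right_div n [:: j] (x_ k))) => // not_end.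
have [|[u Eu]] := delta_cofactor_letter Ex' Hj.
  by move/(right_div_letter _ (nth_valid Hk')).
have [w Ew] := (left_div_letter _ (nth_valid Hk)).1 Hl.
have Vu : valid n u by move: Vx'; rewrite -(braid_eq_valid n Eu) => /andP [].
have Vw : valid n w by move: (nth_valid Hk); rewrite -(braid_eq_valid n Ew) => /andP [].
have [_ [_ gcd_max]] := xs_gcd k Hk'.
have : left_div n (x_ k ++ [:: j]) (x_ k).
  apply: gcd_max; first by rewrite valid_cat nth_valid //= andbT.
    by exists u; split=> //; rewrite -Ex' -Eu -catA.
  exists (w ++ flatten (drop k.+2 xs)); split; first by rewrite valid_cat Vw flatten_drop_valid.
  by rewrite (flatten_drop_nth Hk') (flatten_drop_nth Hk) -Ew -!catA.
by case=> z [_ /braid_eq_size]; rewrite !size_cat /=; lia.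
Qed.

(* Going down the sequence: the complement of [x_k] in [delta n] and
   [x_(k+1) x_(k+2) ...] share no first letter [j], since [j] would both start
   [x_(k+1)], hence end [x_k], and start the complement. *)
Lemma sorted_gcd_suffix : sorted (normal_step n) xs ->
  forall k z, k < size xs -> valid n z -> left_div n z (delta n) ->
  left_div n z (flatten (drop k xs)) -> left_div n z (x_ k).
Proof.
move=> xs_sorted k z Hk; move sk : (size xs - k) => m.
elim: m k z sk Hk => [|m IH] k z sk Hk Vz [U [_ EU]] [V [_ EV]]; first by lia.
have [x' [_ Ex']] := (nth_simple Hk).2.
have coprime j : starts_with j x' -> starts_with j (flatten (drop k.+1 xs)) -> False.
  move=> jx' [u Eu].
  have Hj : 0 < j < n by apply: (starts_with_letter (flatten_drop_valid k.+1)); exists u.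
  have Hk1 : k.+1 < size xs.
    by case: (ltnP k.+1 (size xs)) => // ?; move: Eu; rewrite drop_oversize // => /braid_eq_size.
  have jx1 : left_div n [:: j] (x_ k.+1).
    apply: (IH k.+1) => //; first by lia.
    + by rewrite /valid /= Hj.
    + by have [z' [Vz' Ez']] := delta_factor_letter Hj; exists z'.
    + by apply/(left_div_letter _ (flatten_drop_valid k.+1)); exists u.
  have := (sortedP [::] xs_sorted) k Hk1 => /normal_stepP /(_ j Hj jx1).
  move/(right_div_letter _ (nth_valid Hk)) => jx.
  exact: delta_cut_square_free Ex' jx jx'.
have [W EW] : exists W, z ++ W ≡ x_ k.
  apply: (prefix_cat_coprime coprime); first by exists U; rewrite EU -Ex'.
  by exists V; rewrite EV flatten_drop_nth.
by exists W; split=> //; move: (nth_valid Hk); rewrite -(braid_eq_valid n EW) valid_cat => /andP [].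
Qed.

Lemma normal_sorted : normal n xs <-> sorted (normal_step n) xs.
Proof.
split=> [xs_normal|xs_sorted].
  by apply/(sortedP [::]) => k; apply: normal_normal_step.
split=> // k Hk; have [x' [Vx' Ex']] := (nth_simple Hk).2.
split; first by exists x'.
split; first by exists (flatten (drop k.+1 xs)); rewrite flatten_drop_valid -flatten_drop_nth.
by move=> z Vz; apply: sorted_gcd_suffix.
Qed.

End NormalSequences.

Lemma card_set_sum (T : finType) (P : pred T) : #|[set x | P x]| = \sum_(x : T) P x.
Proof. by rewrite -sum1dep_card big_mkcond; apply: eq_bigr => x _; case: (P x). Qed.

Section Counting.

Variables (n : nat) (s : seq (seq nat)).
Hypothesis s_simple : forall x, x \in s -> simple n x.

Let x_ (i : 'I_(size s)) := nth [::] s i.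

Definition chain_end (J : {set 'I_n.-1}) (xs : seq (seq nat)) : bool :=
  if xs is x :: xs' then sorted (normal_step n) xs && (J \subset DR n (last x xs')) else true.

Lemma chain_end_rcons J xs x :
  chain_end J (rcons xs x) = chain_end (DL n x) xs && (J \subset DR n x).
Proof. by case: xs => [|y xs] //=; rewrite rcons_path last_rcons. Qed.

Lemma sorted_rcons_chain_end xs y :
  sorted (normal_step n) (rcons xs y) = chain_end (DL n y) xs.
Proof. by case: xs => [|x xs] //=; rewrite rcons_path. Qed.

Definition chain_count m (J : {set 'I_n.-1}) : nat :=
  #|[set f : {ffun 'I_m -> 'I_(size s)} | chain_end J [seq x_ (f k) | k <- enum 'I_m]]|.

Lemma chain_count0 J : chain_count 0 J = 1.
Proof.
rewrite /chain_count card_set_sum (eq_bigr (fun _ => 1)) => [|f _]; last by rewrite enum_ord0.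
by rewrite sum1_card card_ffun !card_ord.
Qed.

Definition ffun_rcons m (p : 'I_(size s) * {ffun 'I_m -> 'I_(size s)}) :
  {ffun 'I_m.+1 -> 'I_(size s)} :=
  [ffun k => if unlift ord_max k is Some k' then p.2 k' else p.1].

Lemma ffun_rcons_bij m : bijective (@ffun_rcons m).
Proof.
exists (fun f : {ffun 'I_m.+1 -> 'I_(size s)} => (f ord_max, [ffun k => f (lift ord_max k)])).
  move=> [i g].
  rewrite /ffun_rcons ffunE unlift_none; congr pair; apply/ffunP => k.
  by rewrite !ffunE liftK.
by move=> f; apply/ffunP => k; rewrite ffunE; case: unliftP => [j ->|->] //; rewrite ffunE.
Qed.

Lemma map_ffun_rcons m (F : 'I_(size s) -> seq nat) p :
  [seq F (ffun_rcons p k) | k <- enum 'I_m.+1] = rcons [seq F (p.2 k) | k <- enum 'I_m] (F p.1).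
Proof.
rewrite enum_ordSr map_rcons -map_comp /ffun_rcons ffunE unlift_none; congr rcons.
apply: eq_map => k /=; rewrite ffunE.
have -> : widen_ord (leqnSn m) k = lift ord_max k.
  by apply: val_inj; rewrite /= /bump leqNgt ltn_ord.
by rewrite liftK.
Qed.

Lemma chain_countS m J : chain_count m.+1 J =
  \sum_(i : 'I_(size s)) (J \subset DR n (x_ i)) * chain_count m (DL n (x_ i)).
Proof.
rewrite /chain_count card_set_sum (reindex _ (onW_bij _ (@ffun_rcons_bij m))).
rewrite -(pair_big predT predT (fun i g => chain_end J [seq x_ (ffun_rcons (i, g) k) | k <- _] : nat)).
apply: eq_bigr => i _; rewrite card_set_sum big_distrr.
apply: eq_bigr => g _; rewrite map_ffun_rcons chain_end_rcons.
by case: (chain_end _ _); case: (J \subset _).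
Qed.

Lemma a_countE I J : a_count n s I J =
  \sum_(i : 'I_(size s)) ((I == DL n (x_ i)) && (J \subset DR n (x_ i))).
Proof.
rewrite /a_count card_set_sum; apply: eq_bigr => i _.
case: asboolP => [[/DL_isE -> /DR_supsetE ->]|H]; first by rewrite eqxx.
case: eqP => [E|] //; case: (boolP (J \subset _)) => // HJ.
by case: H; split; [apply/DL_isE | apply/DR_supsetE].
Qed.

Lemma chain_count_rec m J : chain_count m.+1 J =
  \sum_(K < #|{set 'I_n.-1}|) chain_count m (enum_val K) * a_count n s (enum_val K) J.
Proof.
rewrite chain_countS.
under [RHS]eq_bigr => K _ do rewrite a_countE big_distrr /=.
rewrite exchange_big /=; apply: eq_bigr => i _.
rewrite (bigD1 (enum_rank (DL n (x_ i)))) //= enum_rankK eqxx /= big1 ?addn0 1?mulnC //.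
move=> K HK; case: eqP => [E|]; last by rewrite muln0.
by case/eqP: HK; rewrite -E enum_valK.
Qed.

Lemma b_count_chain_count y d : simple n y -> b_count n d s y = chain_count d.-1 (DL n y).
Proof.
move=> y_simple; rewrite /b_count /chain_count; apply: eq_card => f; rewrite !inE.
set xs := [seq nth [::] s (f k) | k <- enum 'I_d.-1].
have xs_simple x : x \in xs ++ [:: y] -> simple n x.
  rewrite mem_cat inE => /orP [/mapP [k _ ->]|/eqP -> //].
  by apply: s_simple; apply: mem_nth.
rewrite -sorted_rcons_chain_end -cats1.
by apply/asboolP/idP => H; apply/(normal_sorted xs_simple).
Qed.

Local Open Scope ring_scope.

Lemma chain_count_mx m J : (chain_count m J)%:Z =
  ((const_mx 1 : 'rV[int]_(#|{set 'I_n.-1}|)) *m (Mprime n s) ^+ m) 0 (enum_rank J).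
Proof.
elim: m J => [|m IH] J; first by rewrite chain_count0 expr0 mulmx1 mxE.
rewrite exprSr mulmxA mxE chain_count_rec (big_morph Posz PoszD (erefl (Posz 0))).
apply: eq_bigr => K _; rewrite PoszM IH enum_valK mxE; congr (_ * _).
by rewrite /Mprime mxE enum_rankK.
Qed.

Definition DR_incidence : 'M[int]_(size s, #|{set 'I_n.-1}|) :=
  \matrix_(i, K) (((enum_val K : {set 'I_n.-1}) \subset DR n (x_ i)) : nat)%:Z.
Definition DL_incidence : 'M[int]_(#|{set 'I_n.-1}|, size s) :=
  \matrix_(K, j) (((enum_val K : {set 'I_n.-1}) == DL n (x_ j)) : nat)%:Z.

Lemma Mn_factor : Mn n s = DR_incidence *m DL_incidence.
Proof.
apply/matrixP => i j; rewrite !mxE (bigD1 (enum_rank (DL n (x_ j)))) //= !mxE.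
rewrite enum_rankK eqxx mulr1 big1 ?addr0; last first.
  move=> K HK; rewrite !mxE; case: eqP => [E|]; last by rewrite mulr0.
  by case/eqP: HK; rewrite -E enum_valK.
have ij_simple x : x \in [:: x_ i; x_ j] -> simple n x.
  by rewrite !inE => /orP [] /eqP ->; apply: s_simple; apply: mem_nth.
case: asboolP => [/(normal_sorted ij_simple)|H] /=; first by rewrite andbT /normal_step => ->.
case: (boolP (DL _ _ \subset _)) => // E.
by case: H; apply/(normal_sorted ij_simple); rewrite /= andbT /normal_step.
Qed.

Lemma Mprime_factor : Mprime n s = DL_incidence *m DR_incidence.
Proof.
apply/matrixP => I J; rewrite !mxE a_countE (big_morph Posz PoszD (erefl (Posz 0))).
by apply: eq_bigr => i _; rewrite !mxE -PoszM; case: (_ == _); case: (_ \subset _).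
Qed.

End Counting.

Local Open Scope ring_scope.

(* Expand the determinant of the block matrix [[X, P], [Q, 1]] over [{poly R}]
   by eliminating either of its off-diagonal blocks. *)
Lemma char_poly_mulmxC (R : comNzRingType) p q (P : 'M[R]_(p, q)) (Q : 'M[R]_(q, p)) :
  'X^q * char_poly (P *m Q) = 'X^p * char_poly (Q *m P).
Proof.
set A := map_mx polyC P; set B := map_mx polyC Q; set X : {poly R} := 'X.
have -> : char_poly (P *m Q) = \det (X%:M - A *m B) by rewrite /char_poly /char_poly_mx map_mxM.
have -> : char_poly (Q *m P) = \det (X%:M - B *m A) by rewrite /char_poly /char_poly_mx map_mxM.
set N := block_mx (X%:M : 'M_p) A B (1%:M : 'M_q).
have D1 : \det (block_mx 1%:M (- A) 0 (X%:M : 'M_q) *m N) = \det (X%:M - A *m B) * X ^+ q.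
  rewrite /N mulmx_block !mul1mx !mul0mx !mulmx1 !mulNmx addrN !add0r addrC.
  by rewrite det_lblock det_scalar.
have D2 : \det (block_mx 1%:M 0 (- B) (X%:M : 'M_q) *m N) = X ^+ p * \det (X%:M - B *m A).
  rewrite /N mulmx_block !mul1mx !mul0mx !mulmx1 !mulNmx !addr0 -scalar_mxC addNr.
  by rewrite det_ublock det_scalar addrC.
rewrite det_mulmx det_ublock det1 mul1r det_scalar in D1.
rewrite det_mulmx det_lblock det1 mul1r det_scalar in D2.
by rewrite -D2 mulrC -D1.
Qed.

Lemma char_poly_mulmx_swap (R : idomainType) p q (P : 'M[R]_(p, q)) (Q : 'M[R]_(q, p)) :
  exists k, char_poly (P *m Q) = 'X^k * char_poly (Q *m P) \/
            char_poly (Q *m P) = 'X^k * char_poly (P *m Q).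
Proof.
have XnI k : GRing.lreg ('X^k : {poly R}) by apply/monic_lreg/monicXn.
have E := char_poly_mulmxC P Q.
case: (leqP q p) => [qp|/ltnW pq].
- exists (p - q)%N; left; apply: (XnI q).
  by rewrite E mulrA -exprD subnKC.
- exists (q - p)%N; right; apply: (XnI p).
  by rewrite -E mulrA -exprD subnKC.
Qed.

Theorem lemma2p12 (n : nat) (s : seq (seq nat)) :
  (1 <= n)%N -> simple_reps n s ->
  (exists k : nat,
      char_poly (Mn n s) = 'X^k * char_poly (Mprime n s) \/
      char_poly (Mprime n s) = 'X^k * char_poly (Mn n s)) /\
  (forall (y : seq nat) (J : {set 'I_n.-1}) (d : nat),
      simple n y -> DL_is n y J -> (1 <= d)%N ->
      (b_count n d s y)%:Z =
        ((const_mx 1 : 'rV[int]_(#|{set 'I_n.-1}|)) *m (Mprime n s) ^+ d.-1) 0 (enum_rank J)).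
Proof.
move=> _ [s_simple _]; split.
  by rewrite Mn_factor // Mprime_factor; apply: char_poly_mulmx_swap.
move=> y J d y_simple /DL_isE -> _.
by rewrite b_count_chain_count // chain_count_mx.
Qed.
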